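(* Let $s\geq 2$ and suppose $G_{(s,0)}$ acts faithfully and transitively on a set of $n$ points, and that the translation subgroup $T=\langle u,v\rangle$ has exactly $m=3$ orbits, each of size $k$ (so $n=3k$). Then $k=ds$ for some positive divisor $d$ of $s$.
   Context: $G_{(s,0)}$ is the group of the toroidal hypermap $(3,3,3)_{(s,0)}$: the Coxeter group $[3,3,3]=\langle\rho_0,\rho_1,\rho_2\mid \rho_i^2=1,\ (\rho_i\rho_j)^3=1\ (i\neq j)\rangle$ factored by $(\rho_0\rho_1\rho_2\rho_1)^s$. Here $u=\rho_0\rho_1\rho_2\rho_1$ and $v=\rho_1 u\rho_1=\rho_1\rho_0\rho_1\rho_2$; $T=\langle u,v\rangle$ is a normal abelian subgroup of order $s^2$, so its orbits are blocks of equal size. *)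

From mathcomp Require Import all_boot all_fingroup.
Set Implicit Arguments. Unset Strict Implicit. Unset Printing Implicit Defensive.
Local Open Scope group_scope.

Definition isog_G_s0 (gT : finGroupType) (G : {set gT}) (s : nat) : Prop :=
  G \isog Grp (x0 : x1 : x2 :
    (x0 ^+ 2 = 1, x1 ^+ 2 = 1, x2 ^+ 2 = 1,
     (x0 * x1) ^+ 3 = 1, (x0 * x2) ^+ 3 = 1, (x1 * x2) ^+ 3 = 1,
     (x0 * x1 * x2 * x1) ^+ s = 1)).

(* A permutation representation of G_(s,0) on 'I_n: images r0 r1 r2 of the
   generators rho0 rho1 rho2 satisfying the defining relations (so that
   rho_i |-> r_i extends to a homomorphism G_(s,0) -> Sym(n)), and such that
   the action is faithful, i.e. the homomorphism is injective, i.e. the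
   permutation group generated is isomorphic to G_(s,0). *)
Definition faithful_G_s0_action (s n : nat) (r0 r1 r2 : {perm 'I_n}) : Prop :=
  [/\ [/\ r0 ^+ 2 = 1, r1 ^+ 2 = 1 & r2 ^+ 2 = 1],
      [/\ (r0 * r1) ^+ 3 = 1, (r0 * r2) ^+ 3 = 1 & (r1 * r2) ^+ 3 = 1],
      (r0 * r1 * r2 * r1) ^+ s = 1
    & isog_G_s0 <<[set r0; r1; r2]>> s].

Definition transl_u n (r0 r1 r2 : {perm 'I_n}) := r0 * r1 * r2 * r1.
Definition transl_v n (r0 r1 r2 : {perm 'I_n}) := r1 * transl_u r0 r1 r2 * r1.
Definition transl_T n (r0 r1 r2 : {perm 'I_n}) : {set {perm 'I_n}} :=
  <<[set transl_u r0 r1 r2; transl_v r0 r1 r2]>>.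

From mathcomp Require Import all_boot all_fingroup all_algebra cyclic ring zify.
Set Implicit Arguments. Unset Strict Implicit. Unset Printing Implicit Defensive.
Import GRing.Theory.
Local Open Scope group_scope.

(* The proof compares two bounds on |G|:
   - upper bound: in any group generated by three involutions a, b, c whose
     pairwise products have order dividing 3, T = <u, v> is abelian, it is
     normalised by b and c, and G = T <b, c> with |<b, c>| <= 6; hence
     |G| <= 6 |T| <= 6 #[u] #[v] <= 6 s^2;
   - lower bound: G_(s,0) acts on (Z/s)^3 (rho1, rho2 permuting coordinates,
     rho0 an affine reflection); there the orbit of the origin has s^2 points
     and its stabiliser contains a copy of S_3, so |G_(s,0)| >= 6 s^2.
   Hence #[u] = s and |T| = s^2.  Since T is abelian and all its orbits have
   size k, every element of T has order dividing k; in particular s | k.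
   Finally k, an orbit length, divides |T| = s^2, so k = d s with d | s. *)

(* Involutions and the braid relation, in a form where a word is written
   right-associated with an arbitrary tail t, so that relations can be
   rewritten anywhere inside a word. *)
Section Involutions.
Variable gT : finGroupType.
Implicit Types x y t : gT.

Lemma invg_involution x : x ^+ 2 = 1 -> x^-1 = x.
Proof. by move=> x2; apply/eqP; rewrite eq_invg_mul -expg2 x2. Qed.

Lemma involutionK x : x ^+ 2 = 1 -> forall t, x * (x * t) = t.
Proof. by move=> x2 t; rewrite -{1}(invg_involution x2) mulKg. Qed.

Lemma braid_involutions x y : x ^+ 2 = 1 -> y ^+ 2 = 1 -> (x * y) ^+ 3 = 1 ->
  forall t, x * (y * (x * t)) = y * (x * (y * t)).
Proof.
move=> x2 y2 xy3 t; rewrite !mulgA; congr (_ * t); apply/eqP.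
by rewrite eq_mulgV1 !invMg !invg_involution // -xy3 !expgS expg0 mulg1 !mulgA.
Qed.

End Involutions.

Section TriangleGroup.
Variables (gT : finGroupType) (a b c : gT).
Hypotheses (a2 : a ^+ 2 = 1) (b2 : b ^+ 2 = 1) (c2 : c ^+ 2 = 1).
Hypotheses (ab3 : (a * b) ^+ 3 = 1) (ac3 : (a * c) ^+ 3 = 1) (bc3 : (b * c) ^+ 3 = 1).

Let bb := involutionK b2.
Let cc := involutionK c2.
Let aba := braid_involutions a2 b2 ab3.
Let aca := braid_involutions a2 c2 ac3.
Let bcb := braid_involutions b2 c2 bc3.

Definition translU := a * b * c * b.
Definition translV := b * translU * b.
Definition translT := <<[set translU; translV]>>.

Lemma translU_translV_commute : commute translU translV.
Proof.
rewrite /commute /translV /translU -[_ * _]mulg1 -[RHS]mulg1 -!mulgA.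
by rewrite !bb -aba aca -bcb bb.
Qed.

Lemma abelian_translT : abelian translT.
Proof.
rewrite abelian_gen; apply/centsP => x + y.
rewrite !inE => /orP[] /eqP-> /orP[] /eqP->; try done.
  exact: translU_translV_commute.
exact/commute_sym/translU_translV_commute.
Qed.

Lemma translU_in_translT : translU \in translT.
Proof. by rewrite mem_gen // !inE eqxx. Qed.

Lemma translV_in_translT : translV \in translT.
Proof. by rewrite mem_gen // !inE eqxx orbT. Qed.

Lemma norm_translT g :
  translU ^ g \in translT -> translV ^ g \in translT -> g \in 'N(translT).
Proof.
move=> Ug Vg; rewrite inE -genJ gen_subG; apply/subsetP => x /imsetP[y].
by rewrite !inE => /orP[] /eqP-> ->.
Qed.

(* b swaps u and v; c maps u to u v^-1 and v to v^-1. *)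
Lemma b_norm_translT : b \in 'N(translT).
Proof.
apply: norm_translT.
  by rewrite conjgE (invg_involution b2) mulgA translV_in_translT.
rewrite conjgE (invg_involution b2) /translV -[_ * _]mulg1 -!mulgA bb bb.
by rewrite !mulgA mulg1 translU_in_translT.
Qed.

Lemma c_norm_translT : c \in 'N(translT).
Proof.
have ai := invg_involution a2; have bi := invg_involution b2.
have ci := invg_involution c2.
apply: norm_translT.
  have -> : translU ^ c = translU * translV^-1.
    rewrite conjgE ci /translV /translU !invMg ai bi ci.
    rewrite -[_ * _]mulg1 -[RHS]mulg1 -!mulgA.
    by rewrite bb bcb cc -aca bcb cc bb.
  by rewrite groupM ?groupV ?translU_in_translT ?translV_in_translT.
have -> : translV ^ c = translV^-1.
  rewrite conjgE ci /translV /translU !invMg ai bi ci.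
  by rewrite -[_ * _]mulg1 -[RHS]mulg1 -!mulgA bb bb cc.
by rewrite groupV translV_in_translT.
Qed.

(* T = <u> <v> since u and v commute. *)
Lemma card_translT : #|translT| <= #[translU] * #[translV].
Proof.
have sTUV : translT \subset <[translU]> * <[translV]>.
  rewrite -cent_joinEr; last exact/cents_cycle/commute_sym/translU_translV_commute.
  rewrite gen_subG; apply/subsetP => x; rewrite !inE => /orP[] /eqP->.
    by rewrite mem_gen // inE cycle_id.
  by rewrite mem_gen // inE cycle_id orbT.
apply: leq_trans (subset_leq_card sTUV) _.
by rewrite /order mul_cardG leq_pmulr ?cardG_gt0.
Qed.

(* <b, c> = <bc> <b> is dihedral of order dividing 6. *)
Lemma card_bc_le : #|<[b * c]> <*> <[b]>| <= 6.
Proof.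
have bN : b \in 'N(<[b * c]>).
  rewrite inE -cycleJ cycle_subG.
  have -> : (b * c) ^ b = (b * c)^-1.
    by rewrite conjgE invMg !invg_involution // -!mulgA bb.
  by rewrite groupV cycle_id.
rewrite norm_joinEr ?cycle_subG //.
have o_bc : #[b * c] <= 3 by apply: dvdn_leq => //; rewrite order_dvdn bc3.
have o_b : #[b] <= 2 by apply: dvdn_leq => //; rewrite order_dvdn b2.
apply: leq_trans (leq_mul o_bc o_b).
by rewrite /order mul_cardG leq_pmulr ?cardG_gt0.
Qed.

(* a = u (bcb), so <a, b, c> = T <b, c> with T normal. *)
Lemma card_triangle_le : #|<<[set a; b; c]>>| <= 6 * #|translT|.
Proof.
set D := (<[b * c]> <*> <[b]>)%G.
have bD : b \in D := subsetP (joing_subr _ _) _ (cycle_id b).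
have cD : c \in D.
  by rewrite -(bb c) groupM // (subsetP (joing_subl _ _) _ (cycle_id _)).
have nTD : D \subset 'N(translT).
  by rewrite join_subG !cycle_subG groupM ?b_norm_translT ?c_norm_translT.
have a_uD : a = translU * (b * c * b).
  by rewrite /translU -[LHS]mulg1 -[RHS]mulg1 -!mulgA bb cc bb.
have sGTD : <<[set a; b; c]>> \subset translT * D.
  rewrite -norm_joinEr // gen_subG; apply/subsetP => x.
  rewrite !inE -orbA => /or3P[] /eqP->; last 2 first.
  - exact: (subsetP (joing_subr _ _)).
  - exact: (subsetP (joing_subr _ _)).
  rewrite a_uD groupM //; first exact: (subsetP (joing_subl _ _)) _ translU_in_translT.
  by apply: (subsetP (joing_subr _ _)); rewrite !groupM.
apply: leq_trans (subset_leq_card sGTD) _.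
apply: (@leq_trans (#|translT| * #|D|)).
  by rewrite mul_cardG leq_pmulr ?cardG_gt0.
by rewrite mulnC leq_mul2r card_bc_le orbT.
Qed.

End TriangleGroup.

(* If all orbits of an abelian permutation group T have length k, then every
   element of T has order dividing k: the stabiliser C of a point is normal in
   T with |T / C| = k, so t^k lies in every point stabiliser. *)
Lemma abelian_equal_orbits_exponent (X : finType) (T : {group {perm X}}) k :
  abelian T -> (forall x, #|orbit 'P T x| = k) -> {in T, forall t, t ^+ k = 1}.
Proof.
move=> abT orbT t tT; apply/permP => x; rewrite perm1.
set C := 'C_T[x | 'P].
have nCT : T \subset 'N(C) := sub_abelian_norm abT (subsetIl _ _).
have tN : t \in 'N(C) := subsetP nCT t tT.
have quoT : #|T / C| = k by rewrite card_quotient // -card_orbit.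
have : coset C (t ^+ k) = 1 by rewrite morphX // -quoT expg_cardG ?mem_quotient.
by move/(coset_idr (groupX k tN))/setIP => [_ /astab1P].
Qed.

Lemma order_prime_nt (gT : finGroupType) (x : gT) p :
  prime p -> x ^+ p = 1 -> x != 1 -> #[x] = p.
Proof.
by move=> p_pr xp x_nt; apply/prime_nt_dvdP; rewrite ?order_eq1 ?order_dvdn ?xp.
Qed.

Section TorusModel.
Variable m : nat.
Local Notation s := m.+2.
Local Notation R := 'Z_s.
Local Notation point := (R * R * R)%type.

Definition reflect0 (p : point) : point :=
  let: (x, y, z) := p in ((z + 1)%R, y, (x - 1)%R).
Definition reflect1 (p : point) : point := let: (x, y, z) := p in (y, x, z).
Definition reflect2 (p : point) : point := let: (x, y, z) := p in (x, z, y).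

Lemma reflect0K : involutive reflect0.
Proof. by case=> [[x y] z] /=; congr (_, _, _); ring. Qed.
Lemma reflect1K : involutive reflect1. Proof. by case=> [[x y] z]. Qed.
Lemma reflect2K : involutive reflect2. Proof. by case=> [[x y] z]. Qed.

Definition rho0 := perm (inv_inj reflect0K).
Definition rho1 := perm (inv_inj reflect1K).
Definition rho2 := perm (inv_inj reflect2K).

Definition translate (w p : point) : point :=
  let: (a, b, c) := w in let: (x, y, z) := p in ((x + a)%R, (y + b)%R, (z + c)%R).

Lemma translate_inj w : injective (translate w).
Proof.
case: w => [[a b] c]; apply: (can_inj (g := translate ((- a)%R, (- b)%R, (- c)%R))).
by case=> [[x y] z] /=; congr (_, _, _); ring.
Qed.

Definition translation w := perm (@translate_inj w).

Lemma translationX a b c n p : (translation (a, b, c) ^+ n) p =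
  translate ((a *+ n)%R, (b *+ n)%R, (c *+ n)%R) p.
Proof.
elim: n p => [|n IHn] [[x y] z].
  by rewrite expg0 perm1 /= !mulr0n !addr0.
by rewrite expgS permM IHn permE /= !mulrS; congr (_, _, _); ring.
Qed.

Lemma translation_order w : translation w ^+ s = 1.
Proof.
have s0 (e : R) : (e *+ s)%R = 0%R by rewrite -mulr_natr pchar_Zp // mulr0.
apply/permP => p; case: w => [[a b] c]; rewrite translationX perm1 !s0.
by case: p => [[x y] z] /=; rewrite !addr0.
Qed.

Lemma rho_involutions : [/\ rho0 ^+ 2 = 1, rho1 ^+ 2 = 1 & rho2 ^+ 2 = 1].
Proof.
split; apply/permP => [[[x y] z]];
  by rewrite expg2 permM !permE ?perm1 /=; congr (_, _, _); ring.
Qed.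

Lemma rho_braids :
  [/\ (rho0 * rho1) ^+ 3 = 1, (rho0 * rho2) ^+ 3 = 1 & (rho1 * rho2) ^+ 3 = 1].
Proof.
split; apply/permP => [[[x y] z]];
  by rewrite !expgS expg0 mulg1 !permM !permE ?perm1 /=; congr (_, _, _); ring.
Qed.

Lemma model_translU : translU rho0 rho1 rho2 = translation ((-1)%R, 0%R, 1%R).
Proof.
by apply/permP => [[[x y] z]]; rewrite !permM !permE /=; congr (_, _, _); ring.
Qed.

Lemma model_translV : translV rho0 rho1 rho2 = translation (0%R, (-1)%R, 1%R).
Proof.
by apply/permP => [[[x y] z]]; rewrite !permM !permE /=; congr (_, _, _); ring.
Qed.

Definition modelG := (<[rho0]> <*> <[rho1]> <*> <[rho2]>)%G.

Lemma modelG_hom : modelG \homg Grp (x0 : x1 : x2 :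
    (x0 ^+ 2 = 1, x1 ^+ 2 = 1, x2 ^+ 2 = 1,
     (x0 * x1) ^+ 3 = 1, (x0 * x2) ^+ 3 = 1, (x1 * x2) ^+ 3 = 1,
     (x0 * x1 * x2 * x1) ^+ s = 1)).
Proof.
apply/existsP; exists (rho0, rho1, rho2) => /=.
have [-> -> ->] := rho_involutions; have [-> -> ->] := rho_braids.
by rewrite [_ * rho1]model_translU translation_order !eqxx.
Qed.


Definition origin : point := (0%R, 0%R, 0%R).

Lemma rho_in_modelG : [/\ rho0 \in modelG, rho1 \in modelG & rho2 \in modelG].
Proof.
split.
- exact: subsetP (joing_subl _ _) _ (subsetP (joing_subl _ _) _ (cycle_id _)).
- exact: subsetP (joing_subl _ _) _ (subsetP (joing_subr _ _) _ (cycle_id _)).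
- exact: subsetP (joing_subr _ _) _ (cycle_id _).
Qed.

(* The points u^i v^j (origin) = (-i, -j, i + j), 0 <= i, j < s, are distinct. *)
Lemma card_model_orbit : s * s <= #|orbit 'P modelG origin|.
Proof.
pose u := translU rho0 rho1 rho2; pose v := translV rho0 rho1 rho2.
pose F (ij : 'I_s * 'I_s) := (u ^+ ij.1 * v ^+ ij.2 : {perm point}) origin.
have F_inj : injective F.
  move=> [i j] [i' j']; rewrite /F /u /v /= !permM model_translU model_translV.
  rewrite !translationX /= !mul0rn !addr0 !add0r !mulNrn.
  move/(congr1 (fun p : point => (- p.1.1, - p.1.2)%R)); rewrite /= !opprK.
  case=> /(congr1 val) + /(congr1 val).
  by rewrite /= !val_Zp_nat // !modn_small // => /val_inj-> /val_inj->.
have <- : #|F @: [set: 'I_s * 'I_s]| = (s * s)%N.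
  by rewrite card_imset // cardsT card_prod card_ord.
apply/subset_leq_card/subsetP => _ /imsetP[[i j] _ ->].
have [r0G r1G r2G] := rho_in_modelG.
by apply: mem_orbit; rewrite /u /v /translV /translU !(groupM, groupX).
Qed.

(* rho1 and rho2 fix the origin, and rho1, rho1 rho2 have orders 2 and 3. *)
Lemma six_dvd_card_model_stab : 6 %| #|'C_modelG[origin | 'P]|.
Proof.
set C := 'C_modelG[origin | 'P].
have [_ r1G r2G] := rho_in_modelG.
have r1C : rho1 \in C by rewrite inE r1G; apply/astab1P; rewrite /= /aperm permE.
have r2C : rho2 \in C by rewrite inE r2G; apply/astab1P; rewrite /= /aperm permE.
have [_ r1_2 _] := rho_involutions; have [_ _ r12_3] := rho_braids.
have moves_e1 (g : {perm point}) : g (1%R, 0%R, 0%R) != (1%R, 0%R, 0%R) -> g != 1.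
  by apply: contraNneq => ->; rewrite perm1.
have o1 : #[rho1] = 2.
  by apply: order_prime_nt => //; apply: moves_e1; rewrite permE.
have o12 : #[rho1 * rho2] = 3.
  by apply: order_prime_nt => //; apply: moves_e1; rewrite permM !permE.
have d2 : 2 %| #|C| by rewrite -o1 order_dvdG.
have d3 : 3 %| #|C| by rewrite -o12 order_dvdG ?groupM.
by rewrite (@Gauss_dvd 2 3) ?d2.
Qed.

Lemma card_modelG : 6 * (s * s) <= #|modelG|.
Proof.
rewrite -(card_orbit_stab 'P modelG origin) mulnC leq_mul ?card_model_orbit //.
by rewrite dvdn_leq ?cardG_gt0 ?six_dvd_card_model_stab.
Qed.

End TorusModel.

(* G_(s,0) has order at least 6 s^2, as it maps onto the torus model. *)
Lemma card_G_s0_ge (gT : finGroupType) (G : {group gT}) s :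
  2 <= s -> isog_G_s0 G s -> 6 * (s * s) <= #|G|.
Proof.
case: s => [|[|m]] // _ isoG; apply: leq_trans (card_modelG m) (leq_homg _).
by rewrite isoG modelG_hom.
Qed.

Lemma squeeze_orders s p q t :
  p <= s -> q <= s -> s * s <= t -> t <= p * q -> p = s /\ t = (s * s)%N.
Proof. by move=> *; split; nia. Qed.

Lemma multiple_dividing_square s k :
  0 < s -> s %| k -> k %| s * s -> exists2 d, 0 < d /\ d %| s & k = (d * s)%N.
Proof.
move=> s_gt0 /dvdnP[d ->]; rewrite dvdn_pmul2r // => d_s; exists d => //.
by split; rewrite // lt0n; apply: contraTneq d_s => ->; rewrite dvd0n -lt0n.
Qed.

Theorem mainTheorem10 (s n k : nat) (r0 r1 r2 : {perm 'I_n}) :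
  2 <= s ->
  faithful_G_s0_action s r0 r1 r2 ->
  [transitive <<[set r0; r1; r2]>>, on [set: 'I_n] | 'P] ->
  #|orbit 'P (transl_T r0 r1 r2) @: [set: 'I_n]| = 3 ->
  (forall x : 'I_n, #|orbit 'P (transl_T r0 r1 r2) x| = k) ->
  exists2 d : nat, 0 < d /\ d %| s & k = (d * s)%N.
Proof.
move=> s_ge2 [[r0_2 r1_2 r2_2] [r01_3 r02_3 r12_3] u_s isoG] _ orbits3 orbits_k.
have s_gt0 : 0 < s by apply: leq_trans s_ge2.
pose T := translT r0 r1 r2; pose u := translU r0 r1 r2; pose v := translV r0 r1 r2.
have v_s : v ^+ s = 1.
  have -> : v = u ^ r1 by rewrite conjgE (invg_involution r1_2) mulgA.
  by rewrite -conjXg u_s conj1g.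
have [ord_u_le ord_v_le] : #[u] <= s /\ #[v] <= s.
  by split; apply: dvdn_leq; rewrite ?order_dvdn ?u_s ?v_s.
have [ord_u card_T] : #[u] = s /\ #|T| = (s * s)%N.
  apply: squeeze_orders ord_u_le ord_v_le _ (card_translT r0_2 r1_2 r2_2 r01_3 r02_3 r12_3).
  rewrite -(leq_pmul2l (isT : 0 < 6)); apply: leq_trans (card_G_s0_ge s_ge2 isoG) _.
  exact: card_triangle_le r0_2 r1_2 r2_2 r02_3 r12_3.
have s_k : s %| k.
  rewrite -ord_u order_dvdn; apply/eqP/(abelian_equal_orbits_exponent _ orbits_k).
    exact: abelian_translT r0_2 r1_2 r2_2 r01_3 r02_3 r12_3.
  exact: translU_in_translT.
have [_ /imsetP[x _ _]] : exists O, O \in orbit 'P T @: [set: 'I_n].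
  by apply/card_gt0P; rewrite orbits3.
have k_T : k %| s * s by rewrite -card_T -(orbits_k x) card_orbit dvdn_indexg.
exact: multiple_dividing_square.
Qed.
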